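(* Consider the problem and algorithm AC2CD described in the context, let $\{x^k\}$ be a sequence produced by AC2CD, and assume $\lim_{k\to\infty}x^k=x^*$. Then there exists an outer iteration $k_z$ such that, for all $k\ge k_z$, \[ l_{j(k)}<z^{k,i}_{j(k)}<u_{j(k)},\quad i=1,\dots,n+1. \]
   Context: Problem: minimize $f(x)$ subject to $e^T x = b$ and $l_i \le x_i \le u_i$ ($i=1,\dots,n$), where $n\ge 2$, $e$ is the all-ones vector, $b\in\mathbb{R}$, $l_i\in\mathbb{R}\cup\{-\infty\}$, $u_i\in\mathbb{R}\cup\{+\infty\}$, $l_i<u_i$, and $f:\mathbb{R}^n\to\mathbb{R}$ is continuously differentiable with $\nabla f$ Lipschitz continuous on $\mathbb{R}^n$. $\mathcal F$ is the feasible set, $e_i$ the $i$th unit vector. For $x\in\mathcal F$, $D_h(x)=\min\{x_h-l_h,u_h-x_h\}$. Algorithm AC2CD with parameters $\tau\in(0,1]$, $\gamma,\delta\in(0,1)$, $0<A_l\le A_u<\infty$ and starting point $x^0\in\mathcal F$: for $k=0,1,2,\dots$: let $D^k=\max_h D_h(x^k)$; choose $j(k)$ with $D_{j(k)}(x^k)\ge\tau D^k$; choose a permutation $(p^k_1,\dots,p^k_n)$ of $\{1,\dots,n\}$; set $z^{k,1}=x^k$; for $i=1,\dots,n$ (inner iteration $(k,i)$): $g^{k,i}=\nabla_{j(k)}f(z^{k,i})-\nabla_{p^k_i}f(z^{k,i})$, $d^{k,i}=g^{k,i}(e_{p^k_i}-e_{j(k)})$; $\bar\alpha^{k,i}=\min\{u_{p^k_i}-z^{k,i}_{p^k_i},z^{k,i}_{j(k)}-l_{j(k)}\}/g^{k,i}$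 if $g^{k,i}>0$, $=\min\{z^{k,i}_{p^k_i}-l_{p^k_i},u_{j(k)}-z^{k,i}_{j(k)}\}/|g^{k,i}|$ if $g^{k,i}<0$, $=0$ if $g^{k,i}=0$; choose $A^{k,i}\in[A_l,A_u]$, set $\Delta^{k,i}=\min\{\bar\alpha^{k,i},A^{k,i}\}$; starting from $\alpha=\Delta^{k,i}$, while $f(z^{k,i}+\alpha d^{k,i})>f(z^{k,i})+\gamma\alpha\nabla f(z^{k,i})^Td^{k,i}$ replace $\alpha$ by $\delta\alpha$; $\alpha^{k,i}$ is the final $\alpha$ and $z^{k,i+1}=z^{k,i}+\alpha^{k,i}d^{k,i}$. Then $x^{k+1}=z^{k,n+1}$. Standing assumptions: $\mathcal L_0=\{x\in\mathcal F: f(x)\le f(x^0)\}$ is nonempty and compact, and every $x\in\mathcal L_0$ has some index $i$ with $l_i<x_i<u_i$. *)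

From HB Require Import structures.
From mathcomp Require Import all_boot all_order all_algebra.
From mathcomp Require Import fingroup perm.
From mathcomp Require Import all_classical all_reals all_analysis.
Set Implicit Arguments. Unset Strict Implicit. Unset Printing Implicit Defensive.
Import Order.TTheory GRing.Theory Num.Theory.
Import numFieldNormedType.Exports.
Local Open Scope ring_scope.

(* Points of R^n are row vectors 'rV[R]_n; the i-th coordinate of x is x 0 i.
   Bounds l_i, u_i are extended reals (l_i may be -oo, u_i may be +oo). *)

Definition dotv (R : realType) (n : nat) (v w : 'rV[R]_n) : R :=
  \sum_(i < n) v 0 i * w 0 i.

Definition unitv (R : realType) (n : nat) (i : 'I_n) : 'rV[R]_n :=
  \row_(h < n) (if h == i then 1 else 0).

Definition feasible (R : realType) (n : nat) (l u : 'I_n -> \bar R) (b : R)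
  (x : 'rV[R]_n) : Prop :=
  \sum_(i < n) x 0 i = b /\ forall i, (l i <= (x 0 i)%:E)%E /\ ((x 0 i)%:E <= u i)%E.

Definition Dh (R : realType) (n : nat) (l u : 'I_n -> \bar R) (x : 'rV[R]_n)
  (h : 'I_n) : \bar R :=
  Order.min ((x 0 h)%:E - l h)%E (u h - (x 0 h)%:E)%E.

Definition Dmax (R : realType) (n : nat) (l u : 'I_n -> \bar R) (x : 'rV[R]_n)
  : \bar R :=
  \big[Order.max/-oo%E]_(h < n) Dh l u x h.

Definition gcoef (R : realType) (n : nat) (gradf : 'rV[R]_n -> 'rV[R]_n)
  (j p : 'I_n) (z : 'rV[R]_n) : R :=
  gradf z 0 j - gradf z 0 p.

Definition dir (R : realType) (n : nat) (gradf : 'rV[R]_n -> 'rV[R]_n)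
  (j p : 'I_n) (z : 'rV[R]_n) : 'rV[R]_n :=
  gcoef gradf j p z *: (unitv R p - unitv R j).

(* maximal feasible stepsize \bar\alpha (possibly +oo) *)
Definition alphabar (R : realType) (n : nat) (l u : 'I_n -> \bar R)
  (gradf : 'rV[R]_n -> 'rV[R]_n) (j p : 'I_n) (z : 'rV[R]_n) : \bar R :=
  let g := gcoef gradf j p z in
  if 0 < g then
    (Order.min (u p - (z 0 p)%:E) ((z 0 j)%:E - l j) * (g^-1)%:E)%E
  else if g < 0 then
    (Order.min ((z 0 p)%:E - l p) (u j - (z 0 j)%:E) * (`|g|^-1)%:E)%E
  else 0%E.

(* Delta = min { \bar\alpha, A } (a real number since A is real) *)
Definition Delta (R : realType) (n : nat) (l u : 'I_n -> \bar R)
  (gradf : 'rV[R]_n -> 'rV[R]_n) (j p : 'I_n) (z : 'rV[R]_n) (A : R) : R :=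
  fine (Order.min (alphabar l u gradf j p z) A%:E).

Definition armijo (R : realType) (n : nat) (f : 'rV[R]_n -> R)
  (gradf : 'rV[R]_n -> 'rV[R]_n) (gamma : R) (z d : 'rV[R]_n) (a : R) : Prop :=
  f (z + a *: d) <= f z + gamma * a * dotv (gradf z) d.

(* Inner index i ranges over 0..n-1 (paper: 1..n), and z k i for i = 0..n
   corresponds to the paper's z^{k,1},...,z^{k,n+1}. *)
Definition AC2CD_run (R : realType) (n : nat) (f : 'rV[R]_n -> R)
  (gradf : 'rV[R]_n -> 'rV[R]_n) (l u : 'I_n -> \bar R)
  (tau gamma delta Al Au : R)
  (x : nat -> 'rV[R]_n) (j : nat -> 'I_n) (p : nat -> ({perm 'I_n}))
  (A : nat -> nat -> R) (z : nat -> nat -> 'rV[R]_n) (alpha : nat -> nat -> R)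
  : Prop :=
  forall k : nat,
    (Dh l u (x k) (j k) >= tau%:E * Dmax l u (x k))%E /\
    z k 0%N = x k /\
    x k.+1 = z k n /\
    forall i : 'I_n,
      let zi := z k i in
      let jk := j k in
      let pi := p k i in
      let di := dir gradf jk pi zi in
      let Dl := Delta l u gradf jk pi zi (A k i) in
      Al <= A k i <= Au /\
      (exists m : nat,
          alpha k i = delta ^+ m * Dl /\
          armijo f gradf gamma zi di (delta ^+ m * Dl) /\
          forall m' : nat, (m' < m)%N ->
            ~ armijo f gradf gamma zi di (delta ^+ m' * Dl)) /\
      z k i.+1 = zi + alpha k i *: di.

From HB Require Import structures.
From mathcomp Require Import all_boot all_order all_algebra.
From mathcomp Require Import fingroup perm.
From mathcomp Require Import all_classical all_reals all_analysis.
From mathcomp Require Import ring lra.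
Import Order.TTheory GRing.Theory Num.Theory.
Import numFieldNormedType.Exports.
Set Implicit Arguments. Unset Strict Implicit.
Local Open Scope classical_set_scope.
Local Open Scope ring_scope.

(* The limit x* lies in the closed level set, so some coordinate i0
   of x* is strictly inside its bounds; for large k the same holds for x^k with a
   uniform margin, so D^k and, by the choice of j(k), D_{j(k)}(x^k) are bounded
   below by a fixed positive constant.  On the other hand an inner step moves each
   coordinate by at most alpha |g| and, by the Armijo condition, decreases f by at
   least gamma alpha g^2 >= (gamma / A_u) (alpha |g|)^2.  As f(x^k) - f(x^{k+1})
   tends to 0, all inner points z^{k,i} stay closer to x^k than that margin. *)

Lemma lee_fin_subC (R : realType) (s y : R) (a : \bar R) :
  (s%:E <= y%:E - a = (a <= (y - s)%:E))%E.
Proof. by case: a => [c| |] //=; rewrite ?leey ?leNye // -EFinB !lee_fin; lra. Qed.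

Section Margin.
Variables (R : realType) (n : nat) (l u : 'I_n -> \bar R).
Local Open Scope ereal_scope.

Lemma Dh_margin (y : 'rV[R]_n) h : l h < (y 0 h)%:E -> (y 0 h)%:E < u h ->
  exists2 e : R, (0 < e)%R & e%:E <= Dh l u y h.
Proof.
move=> ly yu; have : 0 < Dh l u y h by rewrite lt_min !sube_gt0 ly yu.
case: (Dh l u y h) => [e| |] // e0; first by exists e.
by exists 1%R; rewrite ?leey.
Qed.

Lemma Dh_shift (y t : 'rV[R]_n) h (d e : R) :
  (d + e)%:E <= Dh l u y h -> (`|y 0 h - t 0 h| <= e)%R -> d%:E <= Dh l u t h.
Proof.
rewrite /Dh !le_min lee_fin_subC => /andP[ly yu]; rewrite ler_distl => /andP[ty yt].
apply/andP; split; first by rewrite lee_fin_subC (le_trans ly) // lee_fin; lra.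
by move: yu; case: (u h) => [c| |] //=; rewrite ?leey // -!EFinB !lee_fin; lra.
Qed.

Lemma Dh_interior (y : 'rV[R]_n) h (t d : R) :
  d%:E <= Dh l u y h -> (`|t - y 0 h| < d)%R -> l h < t%:E /\ t%:E < u h.
Proof.
rewrite /Dh le_min lee_fin_subC => /andP[ly yu]; rewrite ltr_distl => /andP[yt ty].
split; first by apply: (le_lt_trans ly); rewrite lte_fin; lra.
by move: yu; case: (u h) => [c| |] //=; rewrite ?ltry // -!EFinB !lee_fin !lte_fin; lra.
Qed.

Lemma Dh_le_Dmax (y : 'rV[R]_n) h : Dh l u y h <= Dmax l u y.
Proof. exact: le_bigmax. Qed.

Lemma Dh_near (x : nat -> 'rV[R]_n) (y : 'rV[R]_n) h (d e : R) :
  x @ \oo --> y -> (0 < e)%R -> (d + e)%:E <= Dh l u y h ->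
  \forall k \near \oo, d%:E <= Dh l u (x k) h.
Proof.
move=> x_cvg e_gt0 De; have xh_cvg : ((fun k => x k 0 h) @ \oo --> y 0 h)%R.
  exact: continuous_cvg (@coord_continuous _ 1 n 0%R h y) x_cvg.
by apply: filterS (cvgr_dist_le _ _ xh_cvg _ e_gt0) => k; apply: Dh_shift.
Qed.

End Margin.

Section UnitVectors.
Variables (R : realType) (n : nat).
Implicit Types p : 'I_n.

Lemma unitvE p h : unitv R p 0 h = if h == p then 1 else 0.
Proof. by rewrite mxE. Qed.

Lemma sum_unitv_mul (v : 'rV[R]_n) p : \sum_(h < n) v 0 h * unitv R p 0 h = v 0 p.
Proof.
rewrite (bigD1 p) //= big1 => [|h /negbTE hp]; rewrite !mxE ?eqxx ?hp ?mulr1 ?mulr0 ?addr0 //.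
Qed.

Lemma sum_unitv p : \sum_(h < n) unitv R p 0 h = 1.
Proof. by rewrite (bigD1 p) //= big1 => [|h /negbTE hp]; rewrite !mxE ?eqxx ?hp ?addr0. Qed.

End UnitVectors.

Section Direction.
Variables (R : realType) (n : nat) (gradf : 'rV[R]_n -> 'rV[R]_n).
Implicit Types (z : 'rV[R]_n) (j p : 'I_n).

Lemma gcoefC j p z : gcoef gradf p j z = - gcoef gradf j p z.
Proof. by rewrite /gcoef opprB. Qed.

Lemma dirC j p z : dir gradf p j z = dir gradf j p z.
Proof. by rewrite /dir gcoefC scaleNr -scalerN opprB. Qed.

Lemma dir_entry j p z h :
  dir gradf j p z 0 h = gcoef gradf j p z * (unitv R p 0 h - unitv R j 0 h).
Proof. by rewrite /dir !mxE. Qed.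

Lemma dotv_dir j p z : dotv (gradf z) (dir gradf j p z) = - gcoef gradf j p z ^+ 2.
Proof.
transitivity (gcoef gradf j p z * (\sum_(h < n) gradf z 0 h * unitv R p 0 h
                                  - \sum_(h < n) gradf z 0 h * unitv R j 0 h)).
  by rewrite -sumrB mulr_sumr; apply: eq_bigr => h _; rewrite dir_entry; ring.
by rewrite !sum_unitv_mul /gcoef; ring.
Qed.

Lemma dir_entry_le j p z h : `|dir gradf j p z 0 h| <= `|gcoef gradf j p z|.
Proof.
rewrite dir_entry normrM ler_piMr // !unitvE.
by case: eqP; case: eqP; rewrite ?subrr ?normr0 ?subr0 ?sub0r ?normrN ?normr1.
Qed.
End Direction.

Section FeasibleStep.
Variables (R : realType) (n : nat) (gradf : 'rV[R]_n -> 'rV[R]_n).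
Variables (l u : 'I_n -> \bar R) (b : R).
Implicit Types (z : 'rV[R]_n) (j p : 'I_n).

Lemma feasible_transfer z p j (s : R) : feasible l u b z -> 0 <= s ->
  (s%:E <= u p - (z 0 p)%:E)%E -> (s%:E <= (z 0 j)%:E - l j)%E ->
  feasible l u b (z + s *: (unitv R p - unitv R j)).
Proof.
move=> [zb zbox] s0; rewrite leeBrDr // -EFinD lee_fin_subC => sp sj; split.
  under eq_bigr do rewrite !mxE -!unitvE.
  by rewrite big_split -mulr_sumr /= sumrB !sum_unitv subrr mulr0 addr0.
move=> h; rewrite !mxE; case: eqP => [->|_]; case: eqP => [->|_];
  rewrite ?subrr ?subr0 ?sub0r ?mulr0 ?mulr1 ?mulrN1 ?addr0 //.
- split; last by rewrite addrC.
  by apply: le_trans (zbox p).1 _; rewrite lee_fin lerDl.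
- by split=> //; apply: le_trans (zbox j).2; rewrite lee_fin gerDl oppr_le0.
Qed.

Lemma alphabarC j p z : alphabar l u gradf p j z = alphabar l u gradf j p z.
Proof.
rewrite /alphabar gcoefC oppr_gt0 oppr_lt0 normrN.
case: (ltgtP (gcoef gradf j p z) 0) => g0 //.
- by rewrite ltr0_norm // minC.
- by rewrite gtr0_norm // minC.
Qed.

Lemma alphabar_ge0 j p z : feasible l u b z -> (0 <= alphabar l u gradf j p z)%E.
Proof.
move=> [_ zbox]; wlog g0 : j p / 0 <= gcoef gradf j p z.
  move=> wlog_g0; have [|/ltW g_le0] := leP 0 (gcoef gradf j p z); first exact: wlog_g0.
  by rewrite -alphabarC; apply: wlog_g0; rewrite gcoefC oppr_ge0.
rewrite /alphabar; have [gpos|_] := ltP 0 (gcoef gradf j p z); last by rewrite ltNge g0.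
rewrite mule_ge0 ?lee_fin ?invr_ge0 // le_min.
by rewrite suber_ge0 // subre_ge0 // (zbox p).2 (zbox j).1.
Qed.

Lemma feasible_step j p z (a : R) : feasible l u b z -> 0 <= a ->
  (a%:E <= alphabar l u gradf j p z)%E -> feasible l u b (z + a *: dir gradf j p z).
Proof.
move=> zF a0; wlog g0 : j p / 0 <= gcoef gradf j p z.
  move=> wlog_g0; have [|/ltW g_le0] := leP 0 (gcoef gradf j p z); first exact: wlog_g0.
  by rewrite -alphabarC -dirC; apply: wlog_g0; rewrite gcoefC oppr_ge0.
have [gpos|g_le0] := ltP 0 (gcoef gradf j p z); last first.
  have g_eq0 : gcoef gradf j p z = 0 by apply/eqP; rewrite eq_le g_le0 g0.
  by rewrite /dir g_eq0 scale0r scaler0 addr0.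
rewrite /alphabar gpos lee_pdivlMr // le_min -EFinM => /andP[sp sj].
by rewrite /dir scalerA; apply: feasible_transfer; rewrite ?mulr_ge0.
Qed.

Lemma Delta_bounds j p z (A : R) : feasible l u b z -> 0 < A ->
  0 <= Delta l u gradf j p z A <= A /\
  ((Delta l u gradf j p z A)%:E <= alphabar l u gradf j p z)%E.
Proof.
move=> /(alphabar_ge0 j p); rewrite /Delta.
case: (alphabar l u gradf j p z) => [r| |] // r0 A0; last first.
  by rewrite min_r ?leey //= lexx ltW.
rewrite lee_fin in r0; have [rA|Ar] := leP r A.
  by rewrite min_l ?lee_fin //= r0 rA.
by rewrite min_r ?lee_fin ?(ltW Ar) //= (ltW A0) lexx.
Qed.
End FeasibleStep.

Lemma cvg_decrement_le (R : realType) (v : R ^nat) (a c : R) : v @ \oo --> a -> 0 < c ->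
  \forall k \near \oo, v k - v k.+1 <= c.
Proof.
move=> va c0; have vS : (fun k => v k.+1) @ \oo --> a by rewrite cvg_shiftS.
have c2_gt0 : 0 < c / 2 by rewrite divr_gt0.
apply: (filterS2 _ _ (cvgr_dist_le _ _ va _ c2_gt0) (cvgr_dist_le _ _ vS _ c2_gt0)) => k.
by rewrite !ler_distl => /andP[? ?] /andP[? ?]; lra.
Qed.

Section Run.
Variables (R : realType) (n : nat) (f : 'rV[R]_n -> R) (gradf : 'rV[R]_n -> 'rV[R]_n).
Variables (l u : 'I_n -> \bar R) (b tau gamma delta Al Au : R).
Variables (x : nat -> 'rV[R]_n) (j : nat -> 'I_n) (p : nat -> {perm 'I_n}).
Variables (A : nat -> nat -> R) (z : nat -> nat -> 'rV[R]_n) (alpha : nat -> nat -> R).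
Hypothesis run : AC2CD_run f gradf l u tau gamma delta Al Au x j p A z alpha.
Hypotheses (gamma_gt0 : 0 < gamma) (delta_ge0 : 0 <= delta) (delta_le1 : delta <= 1).
Hypotheses (Al_gt0 : 0 < Al) (Al_le_Au : Al <= Au).

Let Au_gt0 : 0 < Au := lt_le_trans Al_gt0 Al_le_Au.

Lemma run_stepsize k (i : 'I_n) : feasible l u b (z k i) ->
  0 <= alpha k i <= Au /\ ((alpha k i)%:E <= alphabar l u gradf (j k) (p k i) (z k i))%E.
Proof.
move=> zF; have [_ [_ [_ /(_ i) [/andP[AlA AAu] [[m [-> _]] _]]]]] := run k.
have [/andP[D0 DA] Dab] := Delta_bounds gradf (j k) (p k i) zF (lt_le_trans Al_gt0 AlA).
have dm0 : 0 <= delta ^+ m by rewrite exprn_ge0.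
have dm1 : delta ^+ m <= 1 by rewrite exprn_ile1.
have aD : delta ^+ m * Delta l u gradf (j k) (p k i) (z k i) (A k i) <=
          Delta l u gradf (j k) (p k i) (z k i) (A k i) by rewrite ler_piMl.
rewrite mulr_ge0 //= (le_trans aD (le_trans DA AAu)); split=> //.
by apply: le_trans Dab; rewrite lee_fin.
Qed.

Lemma run_inner_step k (i : 'I_n) : feasible l u b (z k i) ->
  feasible l u b (z k i.+1) /\
  forall h, gamma * (z k i.+1 0 h - z k i 0 h) ^+ 2 <= Au * (f (z k i) - f (z k i.+1)).
Proof.
move=> zF; have [/andP[a0 aAu] a_ab] := run_stepsize zF.
have [_ [_ [_ /(_ i) [_ [[m [alphaE [armijo_m _]]] zE]]]]] := run k.
rewrite /armijo -alphaE -zE dotv_dir in armijo_m.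
split; first by rewrite zE; exact: feasible_step.
(* gamma (alpha d_h)^2 <= gamma alpha^2 g^2 <= Au gamma alpha g^2, and the Armijo
   condition bounds gamma alpha g^2 by the decrease of f. *)
move=> h; rewrite zE mxE addrAC subrr add0r mxE.
set g := gcoef gradf (j k) (p k i) (z k i); set d := dir gradf (j k) (p k i) (z k i) 0 h.
have dg : d ^+ 2 <= g ^+ 2.
  rewrite -(real_normK (num_real d)) -(real_normK (num_real g)).
  by apply: lerXn2r; rewrite ?nnegrE ?dir_entry_le.
have decrease : gamma * alpha k i * g ^+ 2 <= f (z k i) - f (z k i.+1).
  by move: armijo_m; rewrite -/g mulrN; lra.
have move_sq : (alpha k i * d) ^+ 2 <= Au * (alpha k i * g ^+ 2).
  have : 0 <= alpha k i ^+ 2 * (g ^+ 2 - d ^+ 2) by rewrite mulr_ge0 ?sqr_ge0 ?subr_ge0.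
  have : 0 <= (Au - alpha k i) * (alpha k i * g ^+ 2).
    by rewrite mulr_ge0 ?subr_ge0 // mulr_ge0 ?sqr_ge0.
  rewrite exprMn; nra.
have : 0 <= gamma * (Au * (alpha k i * g ^+ 2) - (alpha k i * d) ^+ 2).
  by apply: mulr_ge0; [exact: ltW | rewrite subr_ge0].
have : 0 <= Au * (f (z k i) - f (z k i.+1) - gamma * alpha k i * g ^+ 2).
  by apply: mulr_ge0; [exact: ltW | rewrite subr_ge0].
rewrite -zE; nra.
Qed.

Lemma run_inner_descent k (i : 'I_n) : feasible l u b (z k i) -> f (z k i.+1) <= f (z k i).
Proof.
move=> /run_inner_step[_ /(_ i) sq]; rewrite -subr_ge0 -(pmulr_rge0 _ Au_gt0).
by apply: le_trans sq; rewrite mulr_ge0 ?sqr_ge0 ?ltW.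
Qed.

Lemma run_inner_feasible k : feasible l u b (x k) ->
  forall i, (i <= n)%N -> feasible l u b (z k i).
Proof.
have [_ [z0 _]] := run k; move=> xF; elim=> [|i IH] ilt; first by rewrite z0.
exact: (run_inner_step (i := Ordinal ilt) (IH (ltnW ilt))).1.
Qed.

Lemma run_inner_nonincreasing k : feasible l u b (x k) ->
  forall i m, (i <= m <= n)%N -> f (z k m) <= f (z k i).
Proof.
move=> xF i; elim=> [|m IH]; first by rewrite leqn0 => /andP[/eqP-> _].
rewrite leq_eqVlt ltnS => /andP[/orP[/eqP-> // | im] mn].
apply: le_trans (IH _); last by rewrite im ltnW.
exact: (run_inner_descent (i := Ordinal mn) (run_inner_feasible xF (ltnW mn))).
Qed.

Lemma run_feasible : feasible l u b (x 0) ->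
  forall k, feasible l u b (x k) /\ f (x k) <= f (x 0).
Proof.
move=> x0F; elim=> [|k [xF fx_le]] //; have [_ [z0 [xS _]]] := run k.
rewrite xS; split; first exact: run_inner_feasible.
apply: le_trans _ fx_le; rewrite -z0.
exact: (run_inner_nonincreasing xF (i := 0) (m := n) (leqnn n)).
Qed.

Lemma run_inner_displacement k (eta : R) : feasible l u b (x k) -> 0 <= eta ->
  Au * (f (x k) - f (x k.+1)) <= gamma * eta ^+ 2 ->
  forall i, (i <= n)%N -> forall h, `|z k i 0 h - x k 0 h| <= i%:R * eta.
Proof.
move=> xF eta0 small; have [_ [z0 [xS _]]] := run k.
have step_le i (ilt : (i < n)%N) h : `|z k i.+1 0 h - z k i 0 h| <= eta.
  have [_ /(_ h) sq] := run_inner_step (i := Ordinal ilt) (run_inner_feasible xF (ltnW ilt)).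
  have dec : f (z k i) - f (z k i.+1) <= f (x k) - f (x k.+1).
    rewrite -z0 xS; apply: lerB.
      exact: (run_inner_nonincreasing xF (i := 0) (m := i) (ltnW ilt)).
    by apply: (run_inner_nonincreasing xF (i := i.+1) (m := n)); rewrite ilt leqnn.
  rewrite -ler_sqr ?nnegrE // real_normK ?num_real // -(ler_pM2l gamma_gt0).
  by apply: le_trans sq (le_trans _ small); rewrite ler_pM2l.
elim=> [|i IH] ilt h; first by rewrite z0 subrr normr0 mul0r.
have -> : z k i.+1 0 h - x k 0 h = (z k i 0 h - x k 0 h) + (z k i.+1 0 h - z k i 0 h).
  by rewrite [RHS]addrC addrA subrK.
rewrite -natr1 mulrDl mul1r; apply: le_trans (ler_normD _ _) _.
by apply: lerD; [exact: IH (ltnW ilt) h | exact: step_le].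
Qed.

Lemma run_inner_interior k (d eta : R) : feasible l u b (x k) -> 0 <= tau -> 0 <= eta ->
  n%:R * eta < tau * d -> (d%:E <= Dmax l u (x k))%E ->
  Au * (f (x k) - f (x k.+1)) <= gamma * eta ^+ 2 ->
  forall i, (i <= n)%N ->
    (l (j k) < (z k i 0 (j k))%:E)%E /\ ((z k i 0 (j k))%:E < u (j k))%E.
Proof.
move=> xF tau0 eta0 n_eta Dk small i ilen; have [sel _] := run k.
apply: (Dh_interior (d := tau * d)).
  by apply: le_trans sel; rewrite EFinM lee_wpmul2l ?lee_fin.
apply: le_lt_trans (run_inner_displacement xF eta0 small ilen (j k)) _.
by apply: le_lt_trans n_eta; rewrite ler_wpM2r // ler_nat.
Qed.

Lemma run_eventually_interior (xstar : 'rV[R]_n) i0 (e : R) : 0 < tau ->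
  (forall k, feasible l u b (x k)) -> x @ \oo --> xstar -> {for xstar, continuous f} ->
  0 < e -> (e%:E <= Dh l u xstar i0)%E ->
  \forall k \near \oo, forall i, (i <= n)%N ->
    (l (j k) < (z k i 0 (j k))%:E)%E /\ ((z k i 0 (j k))%:E < u (j k))%E.
Proof.
move=> tau_gt0 xF x_cvg f_cont e_gt0 De.
pose eta := tau * (e / 2) / n.+1%:R.
have eta_gt0 : 0 < eta by rewrite !divr_gt0 ?mulr_gt0.
have n_eta : n%:R * eta < tau * (e / 2).
  by rewrite /eta mulrCA gtr_pMr ?mulr_gt0 // ltr_pdivrMr // mul1r ltr_nat.
have x_near : \forall k \near \oo, ((e / 2)%:E <= Dh l u (x k) i0)%E.
  by apply: (Dh_near (e := e / 2) x_cvg); rewrite ?divr_gt0 // -splitr.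
have small : \forall k \near \oo, Au * (f (x k) - f (x k.+1)) <= gamma * eta ^+ 2.
  have fx_cvg : (f \o x) @ \oo --> f xstar by exact: continuous_cvg f_cont x_cvg.
  have c_gt0 : 0 < gamma * eta ^+ 2 / Au by rewrite !divr_gt0 ?mulr_gt0 ?exprn_gt0.
  by apply: filterS (cvg_decrement_le fx_cvg c_gt0) => k; rewrite ler_pdivlMr // mulrC.
apply: (filterS2 _ _ x_near small) => k Dk fk.
exact: run_inner_interior (xF k) (ltW tau_gt0) (ltW eta_gt0) n_eta
  (le_trans Dk (Dh_le_Dmax _ _ _ _)) fk.
Qed.
End Run.

Theorem proposition2 (R : realType) (n : nat) (f : 'rV[R]_n -> R)
  (gradf : 'rV[R]_n -> 'rV[R]_n) (l u : 'I_n -> \bar R) (b : R)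
  (tau gamma delta Al Au : R)
  (x : nat -> 'rV[R]_n) (j : nat -> 'I_n) (p : nat -> ({perm 'I_n}))
  (A : nat -> nat -> R) (z : nat -> nat -> 'rV[R]_n) (alpha : nat -> nat -> R)
  (xstar : 'rV[R]_n) :
  (2 <= n)%N ->
  (* bounds: l_i in R u {-oo}, u_i in R u {+oo}, l_i < u_i *)
  (forall i, l i != +oo%E) -> (forall i, u i != -oo%E) ->
  (forall i, (l i < u i)%E) ->
  (* f is continuously differentiable with gradient gradf, which is Lipschitz *)
  (forall y, differentiable f y) ->
  (forall y v, 'd f y v = dotv (gradf y) v) ->
  (exists L : R, forall y w, `|gradf y - gradf w| <= L * `|y - w|) ->
  (* parameters *)
  0 < tau <= 1 -> 0 < gamma < 1 -> 0 < delta < 1 -> 0 < Al <= Au ->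
  (* starting point and standing assumptions *)
  feasible l u b (x 0%N) ->
  compact [set y | feasible l u b y /\ f y <= f (x 0%N)] ->
  (forall y, feasible l u b y -> f y <= f (x 0%N) ->
     exists i, (l i < (y 0 i)%:E)%E /\ ((y 0 i)%:E < u i)%E) ->
  (* the sequence is produced by AC2CD and converges to xstar *)
  AC2CD_run f gradf l u tau gamma delta Al Au x j p A z alpha ->
  x @ \oo --> xstar ->
  exists kz : nat, forall k : nat, (kz <= k)%N ->
    forall i : nat, (i <= n)%N ->
      (l (j k) < (z k i 0 (j k))%:E)%E /\ ((z k i 0 (j k))%:E < u (j k))%E.
Proof.
move=> _ _ _ _ f_diff _ _ /andP[tau_gt0 _] /andP[gamma_gt0 _] /andP[delta_gt0 delta_lt1]
  /andP[Al_gt0 Al_le_Au] x0F L0_compact L0_interior run x_cvg.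
have xF := run_feasible run gamma_gt0 (ltW delta_gt0) (ltW delta_lt1) Al_gt0 Al_le_Au x0F.
have L0_closed : closed [set y | feasible l u b y /\ f y <= f (x 0)].
  by apply: compact_closed L0_compact.
have [xstarF fxstar_le] := closed_cvg _ L0_closed (nearW _ xF) xstar x_cvg.
have [i0 [li0 ui0]] := L0_interior xstar xstarF fxstar_le.
have [e e_gt0 De] := Dh_margin li0 ui0.
have [kz _ Hkz] := run_eventually_interior run gamma_gt0 (ltW delta_gt0) (ltW delta_lt1)
  Al_gt0 Al_le_Au tau_gt0 (fun k => (xF k).1) x_cvg (differentiable_continuous (f_diff xstar))
  e_gt0 De.
by exists kz => k /Hkz.
Qed.
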